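(* Let $\overline{F}$ be a finite set, $r=(r(i,j):i,j\in\overline{F})$ an irreducible stochastic matrix, and $\boldsymbol{\alpha}=(\alpha_j:j\in\overline{F})\in[0,1]^{\overline{F}}$ a non-zero vector, and let $r^{(\boldsymbol{\alpha})}=(I-rI_{(1-\boldsymbol{\alpha})})^{-1}rI_{\boldsymbol{\alpha}}$. If a row vector $y$ satisfies $y\cdot r^{(\boldsymbol{\alpha})}=y$, then $x=y\,(I-rI_{(1-\boldsymbol{\alpha})})^{-1}$ satisfies $x\cdot r=x$, and $y=(\alpha_j x_j:j\in\overline{F})$.
   Context: $I_{\boldsymbol{\alpha}}$ and $I_{(1-\boldsymbol{\alpha})}$ are the diagonal matrices indexed by $\overline{F}$ with diagonal entries $\alpha_j$, resp. $1-\alpha_j$; $I$ is the identity matrix. Under the given assumptions $I-rI_{(1-\boldsymbol{\alpha})}$ is invertible, and $r^{(\boldsymbol{\alpha})}$ is the transition matrix of the Markov chain obtained from the chain with transition matrix $r$ by randomized skipping with acceptance probabilities $\boldsymbol{\alpha}$ (a proposed next state $j$, chosen with probability $r(i,j)$ from the current state $i$, is accepted with probability $\alpha_j$; if rejected, a new proposal is drawn from row $j$ of $r$ without time passing, and so on until acceptance). *)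

From mathcomp Require Import all_boot all_order all_algebra.
Set Implicit Arguments. Unset Strict Implicit. Unset Printing Implicit Defensive.
Import Order.TTheory GRing.Theory Num.Theory.
Local Open Scope ring_scope.

(* State space \overline{F} is represented by 'I_n. *)

Definition stochastic (R : numDomainType) (n : nat) (r : 'M[R]_n) : Prop :=
  (forall i j, 0 <= r i j) /\ (forall i, \sum_(j < n) r i j = 1).

Definition irreducible_mx (R : numDomainType) (n : nat) (r : 'M[R]_n) : Prop :=
  forall i j : 'I_n, exists k : nat, 0 < (r ^+ k) i j.

Definition Ialpha (R : ringType) (n : nat) (alpha : 'I_n -> R) : 'M[R]_n :=
  diag_mx (\row_j alpha j).

Definition I1malpha (R : ringType) (n : nat) (alpha : 'I_n -> R) : 'M[R]_n :=
  diag_mx (\row_j (1 - alpha j)).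

Definition r_alpha (R : fieldType) (n : nat) (r : 'M[R]_n) (alpha : 'I_n -> R)
  : 'M[R]_n :=
  invmx (1%:M - r *m I1malpha alpha) *m (r *m Ialpha alpha).

From mathcomp Require Import all_boot all_order all_algebra.
From mathcomp Require Import lra.
Set Implicit Arguments. Unset Strict Implicit. Unset Printing Implicit Defensive.
Import Order.TTheory GRing.Theory Num.Theory.
Local Open Scope ring_scope.

(* Invertibility of [1 - r I_(1-alpha)] is a maximum principle: a kernel vector
   [v] of its transpose satisfies [v_i = sum_j r_ij (1 - alpha_j) v_j], so at a
   coordinate where [|v|] is maximal every successor [j] has
   [(1 - alpha_j) |v_j| = max |v|]. By irreducibility this propagates to a state
   with [alpha_j > 0], forcing [max |v| = 0]. Once the inverse exists, splitting
   [I = I_alpha + I_(1-alpha)] turns [y r^(alpha) = y] into [x r = x]. *)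

Lemma mxpow_closed (R : pzRingType) (n : nat) (r : 'M[R]_n) (P : pred 'I_n) :
  (forall i j, P i -> r i j != 0 -> P j) ->
  forall k i j, P i -> (r ^+ k) i j != 0 -> P j.
Proof.
move=> Pr; elim=> [|k IHk] i j Pi.
  by rewrite expr0 mxE; case: (i =P j) => [<- //|_]; rewrite eqxx.
rewrite exprSr -mulmxE mxE => rkij.
have [l /andP[rkil rlj]] : exists l, ((r ^+ k) i l != 0) && (r l j != 0).
  apply/existsP; apply: contraR rkij; rewrite negb_exists => /forallP r0.
  apply/eqP; apply: big1 => l _; have := r0 l; rewrite negb_and !negbK.
  by case/orP => /eqP ->; rewrite ?mul0r ?mulr0.
exact: Pr _ _ (IHk _ _ Pi rkil) rlj.
Qed.

Lemma stochastic_row_neq0 (R : numDomainType) (n : nat) (r : 'M[R]_n) :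
  stochastic r -> forall i, exists j, r i j != 0.
Proof.
move=> [_ r1] i; apply/existsP; apply: contraT; rewrite negb_exists => /forallP r0.
have := r1 i; rewrite big1 => [/eqP|j _]; first by rewrite eq_sym oner_eq0.
by apply/eqP; rewrite -[_ == _]negbK r0.
Qed.

Section MaximumPrinciple.

Variables (R : realDomainType) (n : nat) (r : 'M[R]_n) (w v : 'I_n -> R) (m : R).
Hypothesis r_stochastic : stochastic r.
Hypothesis w01 : forall j, 0 <= w j <= 1.
Hypothesis v_le : forall j, `|v j| <= m.
Hypothesis v_harmonic : forall i, v i = \sum_j r i j * w j * v j.

Lemma weight_norm_le j : w j * `|v j| <= m.
Proof. by have := w01 j; have := v_le j; have := normr_ge0 (v j); nra. Qed.

Lemma harmonic_max_succ i j :
  `|v i| = m -> r i j != 0 -> w j * `|v j| = m.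
Proof.
case: r_stochastic => r0 r1 vi rij.
have gap_ge0 k : 0 <= r i k * (m - w k * `|v k|).
  by rewrite mulr_ge0 // subr_ge0 weight_norm_le.
have gap0 : \sum_k r i k * (m - w k * `|v k|) = 0.
  apply/eqP; rewrite eq_le sumr_ge0 // andbT.
  under eq_bigr => k _ do rewrite mulrBr.
  rewrite sumrB -mulr_suml r1 mul1r subr_le0 -{1}vi v_harmonic.
  apply: le_trans (ler_norm_sum _ _ _) _; apply: ler_sum => k _.
  have /andP[w0 _] := w01 k.
  by rewrite !normrM (ger0_norm (r0 i k)) (ger0_norm w0) mulrA.
have /eqP := psumr_eq0P (fun k _ => gap_ge0 k) gap0 (i := j) isT.
by rewrite mulf_eq0 (negbTE rij) subr_eq0 => /eqP <-.
Qed.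

Lemma harmonic_max_closed i j :
  w i * `|v i| = m -> r i j != 0 -> w j * `|v j| = m.
Proof.
move=> wvi; apply: harmonic_max_succ; apply/eqP; rewrite eq_le v_le /=.
by have := w01 i; have := normr_ge0 (v i); rewrite -wvi; nra.
Qed.

End MaximumPrinciple.

Lemma unitmx_1_sub_mul_diag (R : realFieldType) (n : nat) (r : 'M[R]_n)
  (w : 'I_n -> R) :
  stochastic r -> irreducible_mx r -> (forall j, 0 <= w j <= 1) ->
  (exists j, w j != 1) -> (1%:M - r *m diag_mx (\row_j w j)) \in unitmx.
Proof.
move=> r_st r_irr w01 [j1 wj1].
rewrite unitmxE unitfE -det_tr; apply/negP => /det0P [u u_neq0].
rewrite linearB /= trmx1 mulmxBr mulmx1 => /eqP; rewrite subr_eq0 => /eqP uE.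
pose v i := u 0 i.
have v_harmonic i : v i = \sum_j r i j * w j * v j.
  rewrite /v {1}uE mul_mx_diag mxE; apply: eq_bigr => j _.
  by rewrite !mxE mulrC.
pose i0 := [arg max_(i > j1) `|v i|]%O.
have v_le i : `|v i| <= `|v i0|.
  by rewrite /i0; case: arg_maxP => // k _; apply.
have [l r_i0l] := stochastic_row_neq0 r_st i0.
have wvl := harmonic_max_succ r_st w01 v_le v_harmonic erefl r_i0l.
have [k rk_pos] := r_irr l j1.
have max_closed i j : w i * `|v i| == `|v i0| -> r i j != 0 ->
    w j * `|v j| == `|v i0|.
  by move=> /eqP wvi rij; apply/eqP; exact: harmonic_max_closed wvi rij.
have /eqP wvj1 := mxpow_closed max_closed (introT eqP wvl) (lt0r_neq0 rk_pos).
have v0 : `|v i0| = 0.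
  have := w01 j1; have := v_le j1; have := normr_ge0 (v j1).
  move: wj1 wvj1; rewrite neq_lt => /orP[] wj1 wvj1; nra.
apply/negP: u_neq0; rewrite negbK; apply/eqP/rowP => j; rewrite !mxE.
by apply/eqP; rewrite -normr_le0 -v0 v_le.
Qed.

Theorem proposition2p5 (R : realFieldType) (n : nat) (r : 'M[R]_n)
  (alpha : 'I_n -> R) (y : 'rV[R]_n) :
  stochastic r -> irreducible_mx r ->
  (forall j, 0 <= alpha j <= 1) -> (exists j, alpha j != 0) ->
  y *m r_alpha r alpha = y ->
  let x := y *m invmx (1%:M - r *m I1malpha alpha) in
  (1%:M - r *m I1malpha alpha) \in unitmx /\
  x *m r = x /\ (forall j, y 0 j = alpha j * x 0 j).
Proof.
move=> r_st r_irr alpha01 [j0 alpha_j0] yE x.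
have A_unit : (1%:M - r *m I1malpha alpha) \in unitmx.
  apply: unitmx_1_sub_mul_diag => // [j|]; first by have := alpha01 j; lra.
  by exists j0; rewrite subr_eq addrC -subr_eq subrr eq_sym.
have xA : x *m (1%:M - r *m I1malpha alpha) = y by rewrite mulmxKV.
have xrI : x *m r *m Ialpha alpha = y by rewrite -yE /r_alpha !mulmxA.
have I_split : I1malpha alpha + Ialpha alpha = 1%:M.
  by apply/matrixP => i j; rewrite !mxE; case: eqP => _; rewrite ?subrK ?addr0.
have xr : x *m r = x.
  move: xA; rewrite mulmxBr mulmx1 -xrI mulmxA => /eqP; rewrite subr_eq => /eqP xE.
  by rewrite {2}xE -mulmxDr addrC I_split mulmx1.
split=> //; split=> // j.
by rewrite -xrI xr mul_mx_diag !mxE mulrC.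
Qed.
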